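(* Let $A$ and $B$ be flat layouts. Then $\Phi_A=\Phi_B$ if and only if $\mathrm{coal}^\flat(A)=\mathrm{coal}^\flat(B)$.
   Context: A flat layout $L=(s_1,\dots,s_m):(d_1,\dots,d_m)$ consists of a tuple of positive integers (shape) and a tuple of nonnegative integers (stride) of the same length; its modes are $s_i:d_i$. Its layout function $\Phi_L:[0,s_1\cdots s_m)\to\mathbb{Z}$ is $\Phi_L(x)=\sum_{i=1}^m x_id_i$ where $x_i=\lfloor x/(s_1\cdots s_{i-1})\rfloor \bmod s_i$ (so equality $\Phi_A=\Phi_B$ includes equality of domains). $\mathrm{squeeze}(L)$ removes all modes with $s_i=1$. $\mathrm{coal}^\flat(L)$ is obtained from $\mathrm{squeeze}(L)$ by repeatedly replacing adjacent modes $s_i,s_{i+1}:d_i,d_{i+1}$ with $d_{i+1}=s_id_i$ by the single mode $s_is_{i+1}:d_i$, until no such adjacent pair remains (equivalently, merging each maximal run of consecutive modes linked by $d_{i+1}=s_id_i$ into one mode with shape the product and stride the first stride). *)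

From mathcomp Require Import all_boot.
Set Implicit Arguments. Unset Strict Implicit. Unset Printing Implicit Defensive.

(* A flat layout: list of modes (shape, stride). Shapes are required to be
   positive separately (predicate [layout_ok]). *)
Definition layout := seq (nat * nat).

Definition shapes (L : layout) : seq nat := map fst L.
Definition strides (L : layout) : seq nat := map snd L.

Definition layout_ok (L : layout) : bool := all (fun m => 0 < m.1) L.

Definition lsize (L : layout) : nat := \prod_(m <- L) m.1.

Definition coord (L : layout) (i : nat) (x : nat) : nat :=
  (x %/ \prod_(m <- take i L) m.1) %% (nth (1, 0) L i).1.

Definition layout_fun (L : layout) (x : nat) : nat :=
  \sum_(i < size L) coord L i x * (nth (1, 0) L i).2.

Definition layout_fun_eq (A B : layout) : Prop :=
  lsize A = lsize B /\ forall x, x < lsize A -> layout_fun A x = layout_fun B x.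

Definition squeeze (L : layout) : layout := filter (fun m => m.1 != 1) L.

(* One step of left-to-right coalescing: acc is the already coalesced prefix
   in reverse order. If the last mode (s,d) and new mode (s',d') satisfy
   d' = s*d, they merge into (s*s', d). *)
Definition coal_step (acc : layout) (m : nat * nat) : layout :=
  match acc with
  | (s, d) :: acc' => if m.2 == s * d then (s * m.1, d) :: acc' else m :: acc
  | [::] => [:: m]
  end.

Definition coal_flat (L : layout) : layout :=
  rev (foldl coal_step [::] (squeeze L)).

From mathcomp Require Import all_boot.

Set Implicit Arguments.
Unset Strict Implicit.
Unset Printing Implicit Defensive.

(* Dropping modes of shape 1 does not change the layout function,
   and neither does merging adjacent modes s:d and s':sd into ss':d, because
   (x mod s) d + (x div s mod s') s d = (x mod ss') d is the mixed-radix
   expansion of x mod ss'; hence Phi_L = Phi_(coal L).  Conversely a coalesced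
   layout is determined by its function: if its first mode is s:d then
   Phi(x) = x d for x < s, while either s is the whole size or Phi(s) is the
   stride of the second mode, which differs from s d; so d and s are read off
   Phi, and the remaining modes are determined by y |-> Phi(y s). *)

Fixpoint layout_eval (L : layout) (x : nat) : nat :=
  if L is m :: L' then x %% m.1 * m.2 + layout_eval L' (x %/ m.1) else 0.

Lemma lsize_nil : lsize [::] = 1.
Proof. by rewrite /lsize big_nil. Qed.

Lemma lsize_cons m L : lsize (m :: L) = m.1 * lsize L.
Proof. by rewrite /lsize big_cons. Qed.

Lemma lsize_cat L1 L2 : lsize (L1 ++ L2) = lsize L1 * lsize L2.
Proof. by rewrite /lsize big_cat. Qed.

Lemma coord_cons m L i x : coord (m :: L) i.+1 x = coord L i (x %/ m.1).
Proof. by rewrite /coord /= big_cons divnMA. Qed.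

Lemma layout_funE L : layout_fun L =1 layout_eval L.
Proof.
elim: L => [|m L IHL] x; first by rewrite /layout_fun big_ord0.
rewrite /layout_fun big_ord_recl /= -IHL; congr (_ + _).
  by rewrite /coord /= big_nil divn1.
by apply: eq_bigr => i _; rewrite coord_cons.
Qed.

Lemma layout_eval0 L : layout_eval L 0 = 0.
Proof. by elim: L => //= m L IHL; rewrite mod0n div0n IHL. Qed.

Lemma layout_eval_cat L1 L2 x :
  layout_eval (L1 ++ L2) x = layout_eval L1 x + layout_eval L2 (x %/ lsize L1).
Proof.
elim: L1 x => [|m L1 IHL] x /=; first by rewrite lsize_nil divn1.
by rewrite IHL lsize_cons divnMA addnA.
Qed.

Definition layout_equiv (L1 L2 : layout) : Prop :=
  lsize L1 = lsize L2 /\ layout_eval L1 =1 layout_eval L2.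

Lemma layout_equiv_sym L1 L2 : layout_equiv L1 L2 -> layout_equiv L2 L1.
Proof. by move=> [eqs eqf]; split=> // x; rewrite eqf. Qed.

Lemma layout_equiv_trans L1 L2 L3 :
  layout_equiv L1 L2 -> layout_equiv L2 L3 -> layout_equiv L1 L3.
Proof. by move=> [eqs12 eqf12] [eqs23 eqf23]; split=> [|x]; rewrite ?eqf12 -?eqs23. Qed.

Lemma layout_equiv_cat L1 L1' L2 L2' :
  layout_equiv L1 L1' -> layout_equiv L2 L2' ->
  layout_equiv (L1 ++ L2) (L1' ++ L2').
Proof.
move=> [eqs1 eqf1] [eqs2 eqf2]; split=> [|x]; first by rewrite !lsize_cat eqs1 eqs2.
by rewrite !layout_eval_cat eqs1 eqf1 eqf2.
Qed.

Lemma layout_fun_eq_sym A B : layout_fun_eq A B -> layout_fun_eq B A.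
Proof. by move=> [eqs eqf]; split=> // x; rewrite -eqs => /eqf. Qed.

Lemma layout_fun_eq_equiv A A' B B' :
  layout_equiv A A' -> layout_equiv B B' ->
  layout_fun_eq A B <-> layout_fun_eq A' B'.
Proof.
move=> [eqsA eqfA] [eqsB eqfB]; rewrite /layout_fun_eq eqsA eqsB.
by split=> -[eqs eqf]; split=> // x /eqf; rewrite !layout_funE eqfA eqfB.
Qed.

Lemma modn_mul_radix x s s' : x %% (s * s') = x %% s + s * (x %/ s %% s').
Proof.
rewrite modn_divl [s' * s]mulnC -[x %% s](modn_dvdm _ (dvdn_mulr s' (dvdnn s))).
by rewrite {1}(divn_eq (x %% (s * s')) s) addnC [_ * s]mulnC.
Qed.

Lemma merge_equiv s d s' : layout_equiv [:: (s, d); (s', s * d)] [:: (s * s', d)].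
Proof.
split=> [|x /=]; first by rewrite !lsize_cons mulnA.
by rewrite !addn0 modn_mul_radix mulnDl mulnCA mulnA.
Qed.

Lemma squeeze_equiv L : layout_equiv (squeeze L) L.
Proof.
elim: L => [|[s d] L [eqs eqf]] //; rewrite /squeeze /= -/(squeeze L).
have [->|_] /= := eqVneq s 1.
  by split=> [|x /=]; rewrite ?lsize_cons -?eqs ?mul1n // modn1 divn1 eqf.
by split=> [|x /=]; rewrite ?lsize_cons ?eqs // eqf.
Qed.

Definition shapes_gt1 (L : layout) : bool := all (fun m => 1 < m.1) L.

Definition mergeable (m m' : nat * nat) : bool := m'.2 == m.1 * m.2.

Definition coalesced (L : layout) : bool :=
  shapes_gt1 L && sorted (fun m m' => ~~ mergeable m m') L.

Lemma squeeze_shapes_gt1 L : layout_ok L -> shapes_gt1 (squeeze L).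
Proof. by rewrite /shapes_gt1 /squeeze all_filter; apply: sub_all => -[[|[|s]] d]. Qed.

(* [coal_step] keeps its accumulator reversed, hence the reversed relation. *)
Lemma coal_step_sorted acc m :
  sorted (fun m' m => ~~ mergeable m m') acc ->
  sorted (fun m' m => ~~ mergeable m m') (coal_step acc m).
Proof.
case: acc => [|[s d] acc] //=.
by case: eqP => [_|/eqP ne_md]; [case: acc | rewrite /= /mergeable ne_md].
Qed.

Lemma coal_step_shapes_gt1 acc m :
  shapes_gt1 acc -> 1 < m.1 -> shapes_gt1 (coal_step acc m).
Proof.
case: acc => [|[s d] acc] /=; first by move=> _ ->.
move=> /andP[s_gt1 acc_gt1] m_gt1; case: eqP => _ /=; last by rewrite m_gt1 s_gt1.
by rewrite acc_gt1 andbT (leq_trans m_gt1) // leq_pmull // ltnW.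
Qed.

Lemma coal_step_equiv acc m :
  layout_equiv (rev (coal_step acc m)) (rcons (rev acc) m).
Proof.
case: acc => [|[s d] acc] //=; case: eqP => [md_eq|_]; last by rewrite rev_cons.
rewrite !rev_cons -!cats1 -catA; apply: layout_equiv_cat => //.
by case: m md_eq => s' _ /= ->; apply/layout_equiv_sym/merge_equiv.
Qed.

Lemma foldl_coal_step_equiv acc L :
  layout_equiv (rev (foldl coal_step acc L)) (rev acc ++ L).
Proof.
elim: L acc => [|m L IHL] acc /=; first by rewrite cats0.
rewrite -cat_rcons; apply: layout_equiv_trans (IHL _) _.
exact: layout_equiv_cat (coal_step_equiv acc m) _.
Qed.

Lemma foldl_coal_step_coalesced acc L :
  coalesced (rev acc) -> shapes_gt1 L -> coalesced (rev (foldl coal_step acc L)).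
Proof.
rewrite /coalesced /shapes_gt1 !all_rev !rev_sorted.
elim: L acc => [|m L IHL] acc //= /andP[acc_gt1 acc_sorted] /andP[m_gt1 L_gt1].
apply: IHL L_gt1; apply/andP; split; first exact: coal_step_shapes_gt1.
exact: coal_step_sorted.
Qed.

Lemma coal_flat_equiv L : layout_equiv (coal_flat L) L.
Proof. exact: layout_equiv_trans (foldl_coal_step_equiv [::] _) (squeeze_equiv L). Qed.

Lemma coal_flat_coalesced L : layout_ok L -> coalesced (coal_flat L).
Proof.
by move=> okL; apply: (foldl_coal_step_coalesced (acc := [::])) (squeeze_shapes_gt1 okL).
Qed.

Lemma lsize_gt0 L : shapes_gt1 L -> 0 < lsize L.
Proof.
elim: L => [|m L IHL] /=; first by rewrite lsize_nil.
by move=> /andP[m_gt1 /IHL L_gt0]; rewrite lsize_cons muln_gt0 L_gt0 ltnW.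
Qed.

Lemma layout_eval_cons_lt s d L x :
  x < s -> layout_eval ((s, d) :: L) x = x * d.
Proof. by move=> x_lt_s /=; rewrite modn_small // divn_small // layout_eval0 addn0. Qed.

Lemma layout_eval_cons_mul s d L y :
  0 < s -> layout_eval ((s, d) :: L) (y * s) = layout_eval L y.
Proof. by move=> s_gt0 /=; rewrite modnMl mulnK. Qed.

Lemma coalesced_cons m L : coalesced (m :: L) -> 1 < m.1 /\ coalesced L.
Proof. by case/andP=> /andP[m_gt1 L_gt1] /path_sorted L_sorted; split; last exact/andP. Qed.

Lemma coalesced_head_le_lsize s d C : coalesced ((s, d) :: C) -> s <= lsize ((s, d) :: C).
Proof. by case/andP=> /andP[_ /lsize_gt0 C_gt0] _; rewrite lsize_cons leq_pmulr. Qed.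

Lemma layout_fun_eq_nil L : coalesced L -> layout_fun_eq [::] L -> L = [::].
Proof.
case: L => [|[s d] L] // coalL [eqs _]; have [s_gt1 _] := coalesced_cons coalL.
by move: (coalesced_head_le_lsize coalL); rewrite -eqs lsize_nil leqNgt s_gt1.
Qed.

Lemma layout_fun_eq_head_shape_le s d C t D :
  coalesced ((s, d) :: C) -> coalesced ((t, d) :: D) ->
  layout_fun_eq ((s, d) :: C) ((t, d) :: D) -> s <= t.
Proof.
move=> /coalesced_head_le_lsize s_le_size coalD [eqs eqf].
rewrite leqNgt; apply/negP => t_lt_s.
case: D coalD eqs eqf => [|[t' e'] D] coalD eqs eqf.
  by move: s_le_size; rewrite eqs lsize_cons lsize_nil muln1 leqNgt t_lt_s.
have /andP[/andP[/= t_gt1 /andP[/= t'_gt1 _]] /andP[not_merge _]] := coalD.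
have := eqf t (leq_trans t_lt_s s_le_size).
rewrite !layout_funE layout_eval_cons_lt // -[t in layout_eval _ t]mul1n.
have t_gt0 := ltnW t_gt1.
rewrite layout_eval_cons_mul // layout_eval_cons_lt // mul1n => td_eq.
by move: not_merge; rewrite /mergeable /= -td_eq mulnC eqxx.
Qed.

Lemma coalesced_layout_fun_eq C D :
  coalesced C -> coalesced D -> layout_fun_eq C D -> C = D.
Proof.
elim: C D => [|[s d] C IHC] D coalC coalD eqCD.
  by rewrite (layout_fun_eq_nil coalD eqCD).
case: D coalD eqCD => [|[t e] D] coalD eqCD.
  by have := layout_fun_eq_nil coalC (layout_fun_eq_sym eqCD).
have [s_gt1 coalC'] := coalesced_cons coalC.
have [t_gt1 coalD'] := coalesced_cons coalD.
have [eqs eqf] := eqCD.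
have de : d = e.
  have /eqf := leq_trans s_gt1 (coalesced_head_le_lsize coalC).
  by rewrite !layout_funE !layout_eval_cons_lt // !mul1n.
subst e.
have st : s = t.
  apply/anti_leq/andP; split; first exact: layout_fun_eq_head_shape_le eqCD.
  exact: layout_fun_eq_head_shape_le coalD coalC (layout_fun_eq_sym eqCD).
subst t; congr (_ :: _); apply: IHC => //.
have s_gt0 := ltnW s_gt1.
have eqs' : lsize C = lsize D by apply/eqP; rewrite -(eqn_pmul2l s_gt0) -!lsize_cons eqs.
split=> // y y_lt; have := eqf (y * s).
rewrite lsize_cons [s * _]mulnC ltn_pmul2r // => /(_ y_lt).
by rewrite !layout_funE !layout_eval_cons_mul.
Qed.

Theorem mainTheorem10 (A B : layout) :
  layout_ok A -> layout_ok B ->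
  (layout_fun_eq A B <-> coal_flat A = coal_flat B).
Proof.
move=> okA okB.
apply: iff_trans (iff_sym (layout_fun_eq_equiv (coal_flat_equiv A) (coal_flat_equiv B))) _.
split=> [|->]; last by [].
exact: coalesced_layout_fun_eq (coal_flat_coalesced okA) (coal_flat_coalesced okB).
Qed.
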